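(* Let $B\subset A$ be an arbitrary ring extension. Let $G=A\otimes_B-$ and $T=\operatorname{Hom}_B(A,-)$ be the functors from left $B$-modules to left $A$-modules. Then the following are equivalent: (a) there exists an $A$-bimodule homomorphism $\Delta:A\to A\otimes_BA$; (b) there exists a natural transformation $\eta:T\to G$.
   Context: For a left $B$-module $N$, $G(N)=A\otimes_BN$ with left $A$-action on the first factor, and $T(N)=\operatorname{Hom}_B(A,N)$ (left $B$-linear maps) with left $A$-module structure $(a\cdot\gamma)(b)=\gamma(ba)$; on morphisms $G(f)=A\otimes_Bf$ and $T(f)=f\circ-$. $A\otimes_BA$ is an $A$-bimodule via $a(x\otimes y)b=ax\otimes yb$. A natural transformation $\eta:T\to G$ consists of left $A$-module maps $\eta_N:T(N)\to G(N)$ natural in $N$. *)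

(* Ring extension B ⊂ A given by an injective ring morphism
   i : B -> A.
   The Tens product A ⊗_B N is built as the abelian group presented by
   generators a ⊗ n and the usual relations (a quotient of formal sums). *)
From HB Require Import structures.
From mathcomp Require Import all_boot all_order all_algebra.
From Stdlib Require Import ClassicalEpsilon.
Set Implicit Arguments. Unset Strict Implicit. Unset Printing Implicit Defensive.
Import GRing.Theory.
Local Open Scope ring_scope.

Section RingExt.
Variables (B A : nzRingType) (i : {rmorphism B -> A}).

Definition ABof (j : {rmorphism B -> A}) : Type := A.
Local Notation AB := (ABof i).
HB.instance Definition _ := GRing.Zmodule.on AB.
Definition AB_scale (b : B) (x : AB) : AB := (i b * (x : A) : A).
Fact AB_scalerA a b v : AB_scale a (AB_scale b v) = AB_scale (a * b) v.
Proof. by rewrite /AB_scale rmorphM mulrA. Qed.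
Fact AB_scale1r : left_id 1 AB_scale.
Proof. by move=> v; rewrite /AB_scale rmorph1 mul1r. Qed.
Fact AB_scalerDr : right_distributive AB_scale +%R.
Proof. by move=> a u v; rewrite /AB_scale mulrDr. Qed.
Fact AB_scalerDl v : {morph AB_scale^~ v : a b / a + b}.
Proof. by move=> a b; rewrite /AB_scale rmorphD mulrDl. Qed.
HB.instance Definition _ := GRing.Zmodule_isLmodule.Build B AB
  AB_scalerA AB_scale1r AB_scalerDr AB_scalerDl.

Section Hom.
Variable N : lmodType B.
Record BHom := Hom {
  hfun :> A -> N;
  hfunD : forall x y, hfun (x + y) = hfun x + hfun y;
  hfunZ : forall (b : B) x, hfun (i b * x) = b *: hfun x }.

Definition hadd (g h : BHom) : BHom.
Proof.
refine (@Hom (fun x => g x + h x) _ _).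
- by move=> x y; rewrite !hfunD addrACA.
- by move=> b x; rewrite !hfunZ scalerDr.
Defined.

Definition hact (a : A) (g : BHom) : BHom.
Proof.
refine (@Hom (fun x => g (x * a)) _ _).
- by move=> x y; rewrite mulrDl hfunD.
- by move=> b x; rewrite -mulrA hfunZ.
Defined.
End Hom.

Definition hmap (N N' : lmodType B) (f : {linear N -> N'}) (g : BHom N) : BHom N'.
Proof.
refine (@Hom _ (fun x => f (g x)) _ _).
- by move=> x y; rewrite hfunD linearD.
- by move=> b x; rewrite hfunZ linearZ.
Defined.

Section Tensor.
Variable N : lmodType B.
Definition fsum := seq (A * N).

Inductive tstep : fsum -> fsum -> Prop :=
| ts_comm x y : tstep [:: x; y] [:: y; x]
| ts_addl a a' n : tstep [:: (a + a', n)] [:: (a, n); (a', n)]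
| ts_addr a n n' : tstep [:: (a, n + n')] [:: (a, n); (a, n')]
| ts_bal a b n : tstep [:: (a * i b, n)] [:: (a, b *: n)]
| ts_zero n : tstep [:: (0, n)] [::].

Inductive teq : fsum -> fsum -> Prop :=
| teq_step l1 s s' l2 : tstep s s' -> teq (l1 ++ s ++ l2) (l1 ++ s' ++ l2)
| teq_refl s : teq s s
| teq_sym s t : teq s t -> teq t s
| teq_trans s t u : teq s t -> teq t u -> teq s u.

Definition Tens : Type := {P : fsum -> Prop | exists s, P = teq s}.
Definition tcl (s : fsum) : Tens := exist _ (teq s) (ex_intro _ s erefl).
Definition trep (x : Tens) : fsum :=
  proj1_sig (constructive_indefinite_description _ (proj2_sig x)).

Definition tzero : Tens := tcl [::].
Definition tadd (x y : Tens) : Tens := tcl (trep x ++ trep y).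
Definition tact (a : A) (x : Tens) : Tens :=
  tcl (map (fun p => (a * p.1, p.2)) (trep x)).
End Tensor.

Definition tmap (N N' : lmodType B) (f : {linear N -> N'}) (x : Tens N)
  : Tens N' := tcl (map (fun p => (p.1, f p.2)) (trep x)).

Definition tactr (x : Tens AB) (a : A) : Tens AB :=
  tcl (map (fun p => (p.1, (p.2 : A) * a : AB)) (trep x)).

Definition bimod_hom (D : A -> Tens AB) : Prop :=
  [/\ forall x y, D (x + y) = tadd (D x) (D y),
      forall a x, D (a * x) = tact a (D x)
    & forall x a, D (x * a) = tactr (D x) a].

Definition nat_trans (eta : forall N : lmodType B, BHom N -> Tens N) : Prop :=
  [/\ forall (N : lmodType B) (g h : BHom N), eta N (hadd g h) = tadd (eta N g) (eta N h),
      forall (N : lmodType B) (a : A) (g : BHom N), eta N (hact a g) = tact a (eta N g)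
    & forall (N N' : lmodType B) (f : {linear N -> N'}) (g : BHom N),
        eta N' (hmap f g) = tmap f (eta N g)].
End RingExt.

From Pilot Require Import Defs.
From HB Require Import structures.
From mathcomp Require Import all_boot all_order all_algebra.
From Stdlib Require Import ClassicalEpsilon FunctionalExtensionality.
From Stdlib Require Import PropExtensionality ProofIrrelevance.
Set Implicit Arguments. Unset Strict Implicit. Unset Printing Implicit Defensive.
Import GRing.Theory.
Local Open Scope ring_scope.

(* Write Delta(1) = sum_k x_k ⊗ y_k.  A bimodule map Delta yields
   eta_N(g) = sum_k x_k ⊗ g(y_k) = (A ⊗_B g)(Delta 1); it is A-linear because
   a Delta(1) = Delta(a) = Delta(1) a, and natural by functoriality of A ⊗_B -.
   Conversely, eta yields Delta(a) = eta_A(rho_a), where rho_a in Hom_B(A, A) is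
   right multiplication by a: rho_(x+y) = rho_x + rho_y, rho_(ax) = a . rho_x and
   rho_(xa) = rho_a o rho_x, so naturality of eta at rho_a is right A-linearity
   of Delta. *)

Section TensorFunctor.
Variables (B A : nzRingType) (i : {rmorphism B -> A}).

Section Congruence.
Variable N : lmodType B.
Implicit Types s t : fsum A N.

Lemma tstep_teq s t : tstep i s t -> teq i s t.
Proof. by move=> st; have := teq_step [::] [::] st; rewrite /= !cats0. Qed.

Lemma teq_ctx l r s t : teq i s t -> teq i (l ++ s ++ r) (l ++ t ++ r).
Proof.
elim=> {s t} [l1 s s' l2 st | s | s t _ ts | s t u _ st _ tu].
- by rewrite !catA -!(catA (l ++ l1)) -!(catA _ _ r); apply: teq_step.
- exact: teq_refl.
- exact: teq_sym.
- exact: teq_trans st tu.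
Qed.

Lemma teq_cat s s' t t' : teq i s s' -> teq i t t' -> teq i (s ++ t) (s' ++ t').
Proof.
move=> ss' tt'; apply: (teq_trans (t := s' ++ t)).
  by have := teq_ctx [::] t ss'.
by have := teq_ctx s' [::] tt'; rewrite /= !cats0.
Qed.

Lemma teq_cons_cat (u : A * N) (l r : fsum A N) : teq i (u :: l ++ r) (l ++ u :: r).
Proof.
elim: l => [|v l IHl] /=; first exact: teq_refl.
apply: (teq_trans (t := v :: u :: l ++ r)).
  by have := teq_step [::] (l ++ r) (ts_comm i u v).
exact: (teq_cat (teq_refl i [:: v]) IHl).
Qed.

Lemma trep_tcl s : teq i (trep (tcl i s)) s.
Proof.
rewrite /trep; case: constructive_indefinite_description => r /= teqE.
by rewrite -teqE; apply: teq_refl.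
Qed.

Lemma eq_tcl s t : teq i s t -> tcl i s = tcl i t.
Proof.
move=> st; have teqE : teq i s = teq i t.
  apply: functional_extensionality => u; apply: propositional_extensionality.
  by split=> [su | tu]; [apply: teq_trans su; apply: teq_sym | apply: teq_trans tu].
rewrite /tcl; move: (ex_intro _ s _) (ex_intro _ t _); rewrite teqE => p q.
by rewrite (proof_irrelevance _ p q).
Qed.

Lemma tclK : cancel (@trep B A i N) (@tcl B A i N).
Proof.
move=> [P [s eP]]; have -> : exist _ P (ex_intro _ s eP) = tcl i s.
  by subst P; congr exist; apply: proof_irrelevance.
exact: eq_tcl (trep_tcl s).
Qed.

Lemma tadd_tcl s t : tadd (tcl i s) (tcl i t) = tcl i (s ++ t).
Proof. by apply: eq_tcl; apply: teq_cat; apply: trep_tcl. Qed.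

End Congruence.

Section Maps.
Variables N N' : lmodType B.

Lemma teq_map (phi : A * N -> A * N') :
    (forall s t, tstep i s t -> teq i (map phi s) (map phi t)) ->
  forall s t, teq i s t -> teq i (map phi s) (map phi t).
Proof.
move=> phi_step s t; elim=> {s t} [l1 s s' l2 st | s | s t _ ts | s t u _ st _ tu].
- by rewrite !map_cat; do 2?apply: teq_cat; [apply: teq_refl|apply: phi_step|apply: teq_refl].
- exact: teq_refl.
- exact: teq_sym.
- exact: teq_trans st tu.
Qed.

Lemma teq_mapr (f : {linear N -> N'}) (s t : fsum A N) :
  teq i s t -> teq i (map (fun p => (p.1, f p.2)) s) (map (fun p => (p.1, f p.2)) t).
Proof.
apply: teq_map => {s t} s t [] /= *; rewrite ?linearD ?linearZ; apply: tstep_teq.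
- exact: ts_comm.
- exact: ts_addl.
- exact: ts_addr.
- exact: ts_bal.
- exact: ts_zero.
Qed.

Lemma teq_map_add (f g h : N -> N') (s : fsum A N) : f =1 g \+ h ->
  teq i (map (fun p => (p.1, f p.2)) s)
        (map (fun p => (p.1, g p.2)) s ++ map (fun p => (p.1, h p.2)) s).
Proof.
move=> fE; elim: s => [|[x y] s IHs] /=; first exact: teq_refl.
apply: (teq_trans (t := (x, g y) :: (x, h y) :: (map (fun p => (p.1, g p.2)) s
                                          ++ map (fun p => (p.1, h p.2)) s))).
  rewrite fE; apply: teq_trans (teq_cat (teq_refl i [:: (x, g y); (x, h y)]) IHs).
  exact: (teq_step [::] _ (ts_addr i x (g y) (h y))).
exact: (teq_cat (teq_refl i [:: (x, g y)]) (teq_cons_cat _ _ _)).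
Qed.

Lemma tmap_tcl (f : {linear N -> N'}) (s : fsum A N) :
  tmap f (tcl i s) = tcl i (map (fun p => (p.1, f p.2)) s).
Proof. by apply: eq_tcl; apply: teq_mapr; apply: trep_tcl. Qed.

Lemma tmapD (f g h : {linear N -> N'}) (x : Tens i N) :
  f =1 g \+ h -> tmap f x = tadd (tmap g x) (tmap h x).
Proof.
by move=> fE; rewrite -(tclK x) !tmap_tcl tadd_tcl; apply/eq_tcl/teq_map_add.
Qed.

End Maps.

Lemma teq_mapl (N : lmodType B) (a : A) (s t : fsum A N) :
  teq i s t -> teq i (map (fun p => (a * p.1, p.2)) s) (map (fun p => (a * p.1, p.2)) t).
Proof.
apply: teq_map => {s t} s t [] /= *; rewrite ?mulrDr ?mulrA ?mulr0; apply: tstep_teq.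
- exact: ts_comm.
- exact: ts_addl.
- exact: ts_addr.
- exact: ts_bal.
- exact: ts_zero.
Qed.

Lemma tact_tcl (N : lmodType B) (a : A) (s : fsum A N) :
  tact a (tcl i s) = tcl i (map (fun p => (a * p.1, p.2)) s).
Proof. by apply: eq_tcl; apply: teq_mapl; apply: trep_tcl. Qed.

Lemma tmap_tact (N N' : lmodType B) (f : {linear N -> N'}) (a : A) (x : Tens i N) :
  tmap f (tact a x) = tact a (tmap f x).
Proof. by rewrite -(tclK x) tact_tcl !tmap_tcl tact_tcl -!map_comp. Qed.

Lemma tmap_comp (N N' N'' : lmodType B) (f : {linear N' -> N''}) (g : {linear N -> N'})
    (h : {linear N -> N''}) (x : Tens i N) :
  h =1 f \o g -> tmap h x = tmap f (tmap g x).
Proof.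
move=> hE; rewrite -(tclK x) !tmap_tcl -map_comp.
by congr tcl; apply: eq_map => -[y n] /=; rewrite hE.
Qed.

Lemma bhom_ext (N : lmodType B) (g h : BHom i N) : g =1 h -> g = h.
Proof.
case: g h => g gD gZ [h hD hZ] /= /functional_extensionality ghE; subst h.
by congr Defs.Hom; apply: proof_irrelevance.
Qed.

Lemma hfun_is_linear (N : lmodType B) (g : BHom i N) : linear (hfun g : ABof i -> N).
Proof. by move=> b x y; rewrite hfunD hfunZ. Qed.

HB.instance Definition _ (N : lmodType B) (g : BHom i N) :=
  GRing.isLinear.Build B (ABof i) N *:%R (hfun g : ABof i -> N) (hfun_is_linear g).

Definition rmul_hom (a : A) : BHom i (ABof i).
Proof.
refine (@Defs.Hom B A i (ABof i) (fun x => x * a) _ _).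
- by move=> x y; rewrite mulrDl.
- by move=> b x; rewrite -mulrA.
Defined.

Lemma tactrE (x : Tens i (ABof i)) (a : A) : tactr x a = tmap (rmul_hom a) x.
Proof. by []. Qed.

Lemma nat_trans_tmap (D : A -> Tens i (ABof i)) :
  bimod_hom D -> nat_trans (fun N (g : BHom i N) => tmap g (D 1)).
Proof.
case=> _ DL DR; split=> [N g h | N a g | N N' f g].
- exact: tmapD.
- have D1C : tactr (D 1) a = tact a (D 1) by rewrite -DL -DR mulr1 mul1r.
  by rewrite (@tmap_comp _ _ _ g (rmul_hom a)) // -tactrE D1C tmap_tact.
- exact: tmap_comp.
Qed.

Lemma bimod_hom_rmul (eta : forall N : lmodType B, BHom i N -> Tens i N) :
  nat_trans eta -> bimod_hom (fun a => eta _ (rmul_hom a)).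
Proof.
case=> etaD etaA etaN; split=> [x y | a x | x a].
- by rewrite -etaD; congr eta; apply: bhom_ext => z; apply: mulrDr.
- by rewrite -etaA; congr eta; apply: bhom_ext => z; apply: mulrA.
- by rewrite tactrE -etaN; congr eta; apply: bhom_ext => z; apply: mulrA.
Qed.

End TensorFunctor.

Theorem theorem23 (B A : nzRingType) (i : {rmorphism B -> A}) (i_inj : injective i) :
  (exists Delta : A -> Tens i (ABof i), bimod_hom Delta) <->
  (exists eta : forall N : lmodType B, BHom i N -> Tens i N, nat_trans eta).
Proof.
split=> [[D /nat_trans_tmap natD] | [eta /bimod_hom_rmul bimodD]].
- by exists (fun N (g : BHom i N) => tmap g (D 1)).
- by exists (fun a => eta _ (rmul_hom i a)).
Qed.
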